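(* Let $\mathcal{X}$ be a finite set of actions, $\mathcal{Y}$ a finite set of responses, $\mathcal{H}\subseteq\mathcal{Y}^{\mathcal{X}}$, $\mathrm{cost}:\mathcal{X}\times\mathcal{Y}\to\mathbb{R}_+$, $Q>0$, and let $f:2^{\mathcal{X}\times\mathcal{Y}}\to\mathbb{R}_+$ be a learning objective for $\mathcal{H}$. If there exists an optimal algorithm for $f$ (and $Q$, $\mathcal{H}$), then there exists a bifurcating optimal algorithm for $f,\mathcal{H}$.
   Context: The true state is an unknown $h^*\in\mathcal{H}$. An interactive algorithm $\mathcal{A}$, given the set $S\subseteq\mathcal{X}\times\mathcal{Y}$ of pairs observed so far, outputs either an action $\mathcal{A}(S)\in\mathcal{X}$ (yielding the pair $(x,h^*(x))$, which is added to $S$) or terminates. $S^h_t[\mathcal{A}]$ is the set of pairs collected in the first $t$ iterations and $S^h[\mathcal{A}]$ the set collected until termination, when $h^*=h$. $\mathrm{cost}(S)=\sum_{(x,y)\in S}\mathrm{cost}(x,y)$, $\mathrm{cost}(\mathcal{A})=\max_{h\in\mathcal{H}}\mathrm{cost}(S^h[\mathcal{A}])$. An optimal algorithm is an interactive algorithm with $f(S^h[\mathcal{A}])\ge Q$ for all $h\in\mathcal{H}$ whose cost $\mathrm{cost}(\mathcal{A})$ equals the minimum of $\mathrm{cost}$ over all such algorithms. Version space $V(S)=\{h\in\mathcal{H}\mid \forall(x,y)\in S,\ y=h(x)\}$. $f$ is a learning objective for $\mathcal{H}$ if $f(S)=g(V(S))$ for some monotone non-increasing $g$. Let $\mathcal{Y}(x,S):=\{h(x)\mid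 h\in V(S)\}$. $\mathcal{A}$ is bifurcating for $\mathcal{H}$ if for all $t$ and $h\in\mathcal{H}$ (at which $\mathcal{A}$ selects an action), $|\mathcal{Y}(\mathcal{A}(S^h_t[\mathcal{A}]),S^h_t[\mathcal{A}])|\ge 2$. *)

From mathcomp Require Import all_boot all_order all_algebra.
Set Implicit Arguments. Unset Strict Implicit. Unset Printing Implicit Defensive.
Import Order.TTheory GRing.Theory Num.Theory.
Local Open Scope ring_scope.

Section Interactive.
Variables (X Y : finType) (R : realFieldType).

(* An interactive algorithm: given the set S of observed pairs, returns
   Some x (select action x) or None (terminate). *)
Definition algorithm := {set X * Y} -> option X.

Fixpoint run (A : algorithm) (h : {ffun X -> Y}) (t : nat) : {set X * Y} :=
  match t with
  | 0 => set0
  | t'.+1 => let S := run A h t' in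
             match A S with
             | Some x => (x, h x) |: S
             | None => S
             end
  end.

Definition final (A : algorithm) h (S : {set X * Y}) : Prop :=
  exists t, A (run A h t) = None /\ S = run A h t.

Definition terminates (H : {set {ffun X -> Y}}) (A : algorithm) : Prop :=
  forall h, h \in H -> exists t, A (run A h t) = None.

Definition costS (cost : X -> Y -> R) (S : {set X * Y}) : R :=
  \sum_(p in S) cost p.1 p.2.

Definition feasible (f : {set X * Y} -> R) (Q : R) (H : {set {ffun X -> Y}}) (A : algorithm) : Prop :=
  terminates H A /\ forall h S, h \in H -> final A h S -> Q <= f S.

(* cost(A) = max_{h in H} cost(S^h[A]) <= c *)
Definition cost_le (cost : X -> Y -> R) (H : {set {ffun X -> Y}}) (A : algorithm) (c : R) : Prop :=
  forall h S, h \in H -> final A h S -> costS cost S <= c.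

Definition optimal f Q (H : {set {ffun X -> Y}}) cost (A : algorithm) : Prop :=
  feasible f Q H A /\
  forall B, feasible f Q H B -> forall c, cost_le cost H B c -> cost_le cost H A c.

Definition vspace (H : {set {ffun X -> Y}}) (S : {set X * Y}) : {set {ffun X -> Y}} :=
  [set h in H | [forall p in S, p.2 == h p.1]].

Definition learning_objective (H : {set {ffun X -> Y}}) (f : {set X * Y} -> R) : Prop :=
  exists g : {set {ffun X -> Y}} -> R,
    (forall V1 V2 : {set {ffun X -> Y}}, V1 \subset V2 -> g V2 <= g V1) /\
    forall S, f S = g (vspace H S).

Definition resp (H : {set {ffun X -> Y}}) (x : X) (S : {set X * Y}) : {set Y} :=
  [set (h : {ffun X -> Y}) x | h in vspace H S].

Definition bifurcating (H : {set {ffun X -> Y}}) (A : algorithm) : Prop :=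
  forall t h x, h \in H -> A (run A h t) = Some x ->
    (2 <= #|resp H x (run A h t)|)%N.

End Interactive.

From mathcomp Require Import all_boot all_order all_algebra.
Import Order.TTheory GRing.Theory Num.Theory.
Local Open Scope ring_scope.

(* Given an optimal A, build B as follows: on observations S, B simulates A
   against any hypothesis of the version space of S, skipping every step whose
   action has a response already determined by S, and performs the first
   remaining action (or stops when the simulated A stops).  The skipped steps
   are the same for all hypotheses consistent with S, so B is well defined;
   B is bifurcating by construction.  Along any run, B collects a subset of
   what A collects against the same hypothesis and ends with a smaller version
   space, so B is feasible whenever A is and costs no more. *)

Set Implicit Arguments. Unset Strict Implicit.

Section VersionSpace.
Variables (X Y : finType) (H : {set {ffun X -> Y}}).
Implicit Types (S T : {set X * Y}) (h : {ffun X -> Y}).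

Lemma vspace_in h S : h \in vspace H S -> h \in H.
Proof. by rewrite inE => /andP[]. Qed.

Lemma vspaceS S T : S \subset T -> vspace H T \subset vspace H S.
Proof.
move=> sST; apply/subsetP => h; rewrite !inE => /andP[-> /forallP hT].
by apply/forall_inP => p /(subsetP sST) /(implyP (hT p)).
Qed.

Lemma vspace_setU1 h x S :
  h \in vspace H S -> h \in vspace H ((x, h x) |: S).
Proof.
rewrite !inE => /andP[-> /forallP hS]; apply/forall_inP => p.
by rewrite !inE => /orP[/eqP -> //|/(implyP (hS p))].
Qed.

Lemma vspace_run (A : algorithm X Y) h t : h \in H -> h \in vspace H (run A h t).
Proof.
move=> hH; elim: t => [|t IHt] /=.
  by rewrite inE hH; apply/forall_inP => p; rewrite inE.
by case: (A _) => // x; apply: vspace_setU1.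
Qed.

Lemma respS x S T : S \subset T -> (#|resp H x T| <= #|resp H x S|)%N.
Proof. by move=> sST; apply/subset_leq_card/imsetS/vspaceS. Qed.

Lemma resp_setU1 h x S : (#|resp H x ((x, h x) |: S)| <= 1)%N.
Proof.
apply/card_le1_eqP => _ _ /imsetP[h1 + ->] /imsetP[h2 + ->].
rewrite !inE => /andP[_ /forall_inP h1x] /andP[_ /forall_inP h2x].
by move: (h1x _ (setU11 _ _)) (h2x _ (setU11 _ _)) => /eqP <- /eqP <-.
Qed.

Lemma resp_le1_eq h h' x S : h \in vspace H S -> h' \in vspace H S ->
  (#|resp H x S| <= 1)%N -> h x = h' x.
Proof.
by move=> hS h'S /card_le1_eqP; apply; apply: imset_f.
Qed.

Lemma run_mono (A : algorithm X Y) h s t : (s <= t)%N -> run A h s \subset run A h t.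
Proof.
elim: t => [|t IHt]; first by rewrite leqn0 => /eqP ->.
rewrite leq_eqVlt => /orP[/eqP -> //|/IHt /subset_trans]; apply => /=.
by case: (A _) => // x; apply: subsetUr.
Qed.

End VersionSpace.

Section SkipUninformative.
Variables (X Y : finType) (H : {set {ffun X -> Y}}) (A : algorithm X Y).
Hypothesis A_terminates : terminates H A.
Implicit Types (S : {set X * Y}) (h : {ffun X -> Y}).

Definition informative S x := (1 < #|resp H x S|)%N.

Definition essential_step h S t : bool :=
  if A (run A h t) is Some x then informative S x else true.

(* Outside H the condition is vacuous, so that the minimum below always exists. *)
Lemma essential_step_exists h S : exists t, (h \notin H) || essential_step h S t.
Proof.
case hH: (h \in H); last by exists 0%N.
by have [t At] := A_terminates hH; exists t; rewrite /essential_step At.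
Qed.

Definition next_essential h S : nat := ex_minn (essential_step_exists h S).

Lemma essential_next_essential h S :
  h \in H -> essential_step h S (next_essential h S).
Proof. by rewrite /next_essential => hH; case: ex_minnP => m; rewrite hH. Qed.

Lemma next_essential_min h S s : h \in H ->
  (s < next_essential h S)%N -> ~~ essential_step h S s.
Proof.
rewrite /next_essential => hH; case: ex_minnP => m _ min_m.
by rewrite ltnNge; apply: contra => ess; apply: min_m; rewrite ess orbT.
Qed.

Lemma next_essential_le h S t : h \in H ->
  essential_step h S t -> (next_essential h S <= t)%N.
Proof.
by move=> hH ess; rewrite leqNgt; apply/negP => /(next_essential_min hH); rewrite ess.
Qed.

Lemma run_agree h h' S t : h \in vspace H S -> h' \in vspace H S ->
  (forall s, (s < t)%N -> ~~ essential_step h S s) -> run A h t = run A h' t.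
Proof.
move=> hS h'S; elim: t => [//|t IHt] inessential /=.
rewrite -IHt => [|s /ltnW]; last exact: inessential.
move: (inessential t (ltnSn t)); rewrite /essential_step.
by case: (A _) => // x; rewrite -leqNgt => /(resp_le1_eq hS h'S) ->.
Qed.

Lemma run_agree_next h h' S s : h \in vspace H S -> h' \in vspace H S ->
  (s <= next_essential h S)%N -> run A h s = run A h' s.
Proof.
move=> hS h'S le_s; apply: (run_agree hS h'S) => r lt_rs.
exact/(next_essential_min (vspace_in hS))/(leq_trans lt_rs).
Qed.

Lemma next_essential_vspace h h' S : h \in vspace H S -> h' \in vspace H S ->
  next_essential h' S = next_essential h S.
Proof.
have le_next g g' : g \in vspace H S -> g' \in vspace H S ->
    (next_essential g' S <= next_essential g S)%N.
  move=> gS g'S; apply: next_essential_le; first exact: vspace_in g'S.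
  rewrite /essential_step -(run_agree_next gS g'S) //.
  exact/essential_next_essential/vspace_in/gS.
by move=> hS h'S; apply/eqP; rewrite eqn_leq !le_next.
Qed.

Definition skip_uninformative : algorithm X Y := fun S =>
  if [pick h in vspace H S] is Some h then A (run A h (next_essential h S))
  else None.

Lemma skip_uninformativeE h S : h \in vspace H S ->
  skip_uninformative S = A (run A h (next_essential h S)).
Proof.
move=> hS; rewrite /skip_uninformative; case: pickP => [h' h'S|/(_ h)].
  by rewrite (next_essential_vspace hS h'S) (run_agree_next hS h'S).
by rewrite hS.
Qed.

Lemma skip_uninformative_informative h S x : h \in vspace H S ->
  skip_uninformative S = Some x -> informative S x.
Proof.
move=> hS; rewrite (skip_uninformativeE hS) => Ax.
by move: (essential_next_essential S (vspace_in hS)); rewrite /essential_step Ax.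
Qed.

(* No step up to [next_essential h S] is essential for the new observations:
   the earlier ones only lose informativeness, and the response to x is now known. *)
Lemma next_essential_setU1 h S x : h \in vspace H S ->
  skip_uninformative S = Some x ->
  (next_essential h S < next_essential h ((x, h x) |: S))%N.
Proof.
move=> hS Bx; have hH := vspace_in hS.
rewrite ltnNge; apply/negP; rewrite leq_eqVlt => /orP[/eqP|] next_eq.
  move: (essential_next_essential ((x, h x) |: S) hH).
  by rewrite next_eq /essential_step -(skip_uninformativeE hS) Bx /informative ltnNge resp_setU1.
move: (next_essential_min hH next_eq) (essential_next_essential ((x, h x) |: S) hH).
rewrite /essential_step; case: (A _) => // y; rewrite /informative -leqNgt => le1.
by rewrite ltnNge (leq_trans (respS _ y (subsetUr _ _)) le1).
Qed.

Lemma run_skip_subset h t : h \in H ->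
  run skip_uninformative h t
    \subset run A h (next_essential h (run skip_uninformative h t)).
Proof.
move=> hH; elim: t => [|t IHt] /=; first exact: sub0set.
have hS := vspace_run skip_uninformative t hH.
case Bx: (skip_uninformative (run _ h t)) => [x|] //.
apply: subset_trans (run_mono A h (next_essential_setU1 hS Bx)) => /=.
by rewrite -(skip_uninformativeE hS) Bx setUS.
Qed.

Lemma run_skip_progress h t : h \in H ->
  skip_uninformative (run skip_uninformative h t) = None \/
  (t <= next_essential h (run skip_uninformative h t))%N.
Proof.
move=> hH; elim: t => [|t IHt] /=; first by right.
have hS := vspace_run skip_uninformative t hH.
case Bx: (skip_uninformative (run _ h t)) => [x|]; last by left.
right; case: IHt => [|le_t]; first by rewrite Bx.
exact: leq_ltn_trans le_t (next_essential_setU1 hS Bx).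
Qed.

Lemma skip_uninformative_terminates : terminates H skip_uninformative.
Proof.
move=> h hH; have [T AT] := A_terminates hH; exists T.+1.
have ess_T S : essential_step h S T by rewrite /essential_step AT.
case: (run_skip_progress T.+1 hH) => // /leq_trans/(_ (next_essential_le hH (ess_T _))).
by rewrite ltnn.
Qed.

Lemma skip_uninformative_final h S : h \in H -> final skip_uninformative h S ->
  exists SA, [/\ final A h SA, S \subset SA & vspace H S \subset vspace H SA].
Proof.
move=> hH [t [Bt {S}->]]; set S := run _ h t in Bt *.
have hS : h \in vspace H S by apply: vspace_run.
exists (run A h (next_essential h S)); split.
- by exists (next_essential h S); rewrite -(skip_uninformativeE hS).
- exact: run_skip_subset.
- apply/subsetP => h' h'S.
  by rewrite (run_agree_next hS h'S) // vspace_run // (vspace_in h'S).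
Qed.

End SkipUninformative.

Lemma costS_subset (X Y : finType) (R : realFieldType) (cost : X -> Y -> R)
    (S T : {set X * Y}) :
  (forall x y, 0 <= cost x y) -> S \subset T -> costS cost S <= costS cost T.
Proof.
move=> cost_ge0 sST; rewrite /costS [leRHS](big_setID S) /= (setIidPr sST) lerDl.
exact: sumr_ge0.
Qed.

Lemma learning_objective_le (X Y : finType) (R : realFieldType)
    (H : {set {ffun X -> Y}}) (f : {set X * Y} -> R) (S T : {set X * Y}) :
  learning_objective H f -> vspace H S \subset vspace H T -> f T <= f S.
Proof. by move=> [g [g_anti fE]] sub; rewrite !fE g_anti. Qed.

Unset Implicit Arguments. Set Strict Implicit.
Theorem lemma1 (X Y : finType) (R : realFieldType) (H : {set {ffun X -> Y}})
  (cost : X -> Y -> R) (Q : R) (f : {set X * Y} -> R) :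
  (forall x y, 0 <= cost x y) -> 0 < Q -> (forall S, 0 <= f S) ->
  learning_objective H f ->
  (exists A : algorithm X Y, optimal f Q H cost A) ->
  exists A : algorithm X Y, optimal f Q H cost A /\ bifurcating H A.
Proof.
move=> cost_ge0 _ _ f_obj [A [[A_term A_feas] A_opt]].
exists (skip_uninformative A_term); split; last first.
  by move=> t h x hH; apply/skip_uninformative_informative/vspace_run.
split; first split.
- exact: skip_uninformative_terminates.
- move=> h S hH /(skip_uninformative_final hH)[SA [SA_final _ sub]].
  exact: le_trans (A_feas h SA hH SA_final) (learning_objective_le f_obj sub).
- move=> B B_feas c B_cost h S hH /(skip_uninformative_final hH)[SA [SA_final sSA _]].
  exact: le_trans (costS_subset cost_ge0 sSA) (A_opt B B_feas c B_cost h SA hH SA_final).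
Qed.
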